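(* Let $C_{\mathrm{SSD}}=\mathrm{SSD}(D(X),D(Y))$ be the output of the SSD algorithm applied to the full dictionary snapshots. Consider the P-SSD algorithm described in the context, executed over an arbitrary, possibly time-varying, sequence of digraphs. Then at each iteration $k\in\mathbb{N}_0$, $\mathcal{R}(C_{\mathrm{SSD}})\subseteq\mathcal{R}(C_k^i)$ for all $i\in\{1,\dots,M\}$.
   Context: Data setting: a map $T:\mathcal{M}\to\mathcal{M}$, $\mathcal{M}\subseteq\mathbb{R}^n$; a dictionary $D(x)=[d_1(x),\dots,d_{N_d}(x)]$ of real-valued functions on $\mathcal{M}$; data matrices $X,Y\in\mathbb{R}^{N\times n}$ whose $i$-th rows $x_i^T,y_i^T$ satisfy $y_i=T(x_i)$; $D(X)\in\mathbb{R}^{N\times N_d}$ is the matrix with rows $D(x_1),\dots,D(x_N)$ (similarly $D(Y)$). Assumption: $D(X)$ and $D(Y)$ have full column rank. There are $M$ agents; agent $i$ holds local dictionary snapshots $D(X_i),D(Y_i)$ (obtained from a subset of the snapshot pairs) such that the union over $i$ of the rows of $[D(X_i),D(Y_i)]$ equals the set of rows of $[D(X),D(Y)]$. There are signature matrices $D(X_s),D(Y_s)$ with full column rank such that the rows of $[D(X_s),D(Y_s)]$ are contained in the rows of $[D(X_i),D(Y_i)]$ for every $i$. SSD algorithm: given $A,B\in\mathbb{R}^{m\times q}$, set $A_1=A$, $B_1=B$, $C=I_q$, and iterate: let $[Z^A_j;Z^B_j]$ be a matrix whose columns form a basis of the null space of $[A_j,B_j]$ (with $Z^A_j$ having as many rows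 as $A_j$ has columns); if the null space is trivial return $0$; if the number of rows of $Z^A_j$ is at most its number of columns, return $C$; otherwise set $C\leftarrow CZ^A_j$, $A_{j+1}=A_jZ^A_j$, $B_{j+1}=B_jZ^A_j$. Its output is denoted $\mathrm{SSD}(A,B)$. P-SSD algorithm: at iteration $k\ge1$ the digraph $G_k$ is used; an edge $(j,i)\in E_k$ means $j$ is an in-neighbor of $i$, and $\mathcal{N}_{\mathrm{in}}^k(i)$ denotes the in-neighbors of $i$ in $G_k$. Each agent $i$ sets $C_0^i=I_{N_d}$, $\mathrm{flag}_0^i=0$, and for $k=1,2,\dots$: receives $C_{k-1}^j$ for $j\in\mathcal{N}_{\mathrm{in}}^k(i)$; sets $D_k^i=\mathrm{basis}\big(\bigcap_{j\in\{i\}\cup\mathcal{N}_{\mathrm{in}}^k(i)}\mathcal{R}(C_{k-1}^j)\big)$; sets $E_k^i=\mathrm{SSD}(D(X_i)D_k^i,D(Y_i)D_k^i)$; if the number of columns of $D_k^iE_k^i$ is strictly less than that of $C_{k-1}^i$, sets $C_k^i=D_k^iE_k^i$ and $\mathrm{flag}_k^i=0$; otherwise sets $C_k^i=C_{k-1}^i$ and $\mathrm{flag}_k^i=1$; then transmits $C_k^i$ to its out-neighbors. Here $\mathrm{basis}(\mathcal{A})$ returns a matrix whose columns form a basis of the subspace $\mathcal{A}$, and returns $0$ if $\mathcal{A}=\{0\}$; the matrix $0$ is regarded as having $0$ columns. $\mathcal{R}(\cdot)$ denotes range space. *)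

From HB Require Import structures.
From mathcomp Require Import all_boot all_order all_algebra.
Set Implicit Arguments. Unset Strict Implicit. Unset Printing Implicit Defensive.
Import Order.TTheory GRing.Theory Num.Theory.
Local Open Scope ring_scope.

(* Column vectors / subspaces of R^q are handled through transposes:
   the range (column space) of A : 'M_(q,r) is the row space of A^T. *)

Definition range_sub {R : fieldType} {q r1 r2 : nat}
  (A : 'M[R]_(q, r1)) (B : 'M[R]_(q, r2)) : Prop := (A^T <= B^T)%MS.

Definition null_basis {R : fieldType} {m n r : nat}
  (Mx : 'M[R]_(m, n)) (Z : 'M[R]_(n, r)) : bool :=
  row_free Z^T && (Z^T == kermx Mx^T)%MS.

Definition dict {R : fieldType} {n Nd N : nat}
  (d : 'rV[R]_n -> 'rV[R]_Nd) (X : 'M[R]_(N, n)) : 'M[R]_(N, Nd) :=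
  \matrix_(l < N) d (row l X).

(* Matrices with a variable number of columns (0 columns encodes the matrix 0) *)
Definition cmat (R : fieldType) (q : nat) := {r : nat & 'M[R]_(q, r)}.

(* ssd_run p A B C r out : starting the SSD loop from A_j = A, B_j = B
   (m x p) and current C (q x p), the algorithm may return out (q x r),
   for SOME admissible choice of null-space bases along the way. *)
Inductive ssd_run {R : fieldType} {m q : nat} :
  forall p : nat, 'M[R]_(m, p) -> 'M[R]_(m, p) -> 'M[R]_(q, p) ->
  forall r : nat, 'M[R]_(q, r) -> Prop :=
| SSD_trivial p (A B : 'M[R]_(m, p)) (C : 'M[R]_(q, p)) (Z : 'M[R]_(p + p, 0)) :
    null_basis (row_mx A B) Z -> ssd_run A B C (0 : 'M[R]_(q, 0))
| SSD_stop p (A B : 'M[R]_(m, p)) (C : 'M[R]_(q, p)) r (Z : 'M[R]_(p + p, r.+1)) :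
    null_basis (row_mx A B) Z -> (p <= r.+1)%N -> ssd_run A B C C
| SSD_step p (A B : 'M[R]_(m, p)) (C : 'M[R]_(q, p)) r (Z : 'M[R]_(p + p, r.+1))
    r' (C' : 'M[R]_(q, r')) :
    null_basis (row_mx A B) Z -> (r.+1 < p)%N ->
    ssd_run (A *m usubmx Z) (B *m usubmx Z) (C *m usubmx Z) C' ->
    ssd_run A B C C'.

Definition SSD {R : fieldType} {m q r : nat}
  (A B : 'M[R]_(m, q)) (out : 'M[R]_(q, r)) : Prop :=
  ssd_run A B (1%:M : 'M[R]_q) out.

(* the columns of D form a basis of  ⋂_{j | P j} R(C^j)  (D has 0 columns iff
   the intersection is {0}) *)
Definition cap_basis {R : fieldType} {M Nd s : nat} (P : pred 'I_M)
  (Cs : 'I_M -> cmat R Nd) (D : 'M[R]_(Nd, s)) : bool :=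
  row_free D^T &&
  (D^T == \bigcap_(j | P j) <<(projT2 (Cs j))^T>>)%MS.

(* Cs k i = C_k^i is a possible run of P-SSD over the digraph sequence G,
   where G k j i means (j,i) ∈ E_k, i.e. j is an in-neighbor of i in G_k. *)
Definition pssd_execution {R : fieldType} {M Nd : nat} {Ni : 'I_M -> nat}
  (DXi DYi : forall i : 'I_M, 'M[R]_(Ni i, Nd)) (G : nat -> rel 'I_M)
  (Cs : nat -> 'I_M -> cmat R Nd) : Prop :=
  (forall i, Cs 0%N i = existT (fun r => 'M[R]_(Nd, r)) Nd 1%:M) /\
  (forall (k : nat) (i : 'I_M), exists (s : nat) (D : 'M[R]_(Nd, s))
      (t : nat) (E : 'M[R]_(s, t)),
      cap_basis (fun j => (j == i) || G k.+1 j i) (Cs k) D /\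
      SSD (DXi i *m D) (DYi i *m D) E /\
      Cs k.+1 i = if (t < projT1 (Cs k i))%N
                  then existT (fun r => 'M[R]_(Nd, r)) t (D *m E)
                  else Cs k i).

From HB Require Import structures.
From mathcomp Require Import all_boot all_order all_algebra zify.
Import Order.TTheory GRing.Theory Num.Theory.
Local Open Scope ring_scope.

(* The SSD output C = C_SSD satisfies D(X) C = D(Y) C K for some K: along the
   run the iterates keep full column rank, and at the stopping step the null
   space of [D(X)C, D(Y)C] is so large that R(D(X)C) is contained in R(D(Y)C).
   Since every local snapshot pair is a global one, D(X_i) C = D(Y_i) C K too.
   Such a C survives every SSD pruning step of agent i: if C = C' w, then
   (w, -w K) lies in the null space of [D(X_i)C', D(Y_i)C'], so w = Z^A u and
   C = (C' Z^A) u.  Hence R(C_SSD) lies in R(C_k^i) for all k: it lies in R(I),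
   then in the intersection of the neighbours' ranges, and is preserved by the
   local SSD run. *)

Set Implicit Arguments. Unset Strict Implicit.

Section ColumnSpaces.
Variable R : fieldType.

Lemma range_subP q r1 r2 (A : 'M[R]_(q, r1)) (B : 'M[R]_(q, r2)) :
  range_sub A B <-> exists W : 'M_(r2, r1), A = B *m W.
Proof.
split=> [/submxP [W hW] | [W ->]].
  by exists W^T; rewrite -[A]trmxK hW trmx_mul trmxK.
by apply/submxP; exists W^T; rewrite trmx_mul.
Qed.

Lemma range_sub_mull q q' r1 r2 (L : 'M[R]_(q', q))
    (A : 'M[R]_(q, r1)) (B : 'M[R]_(q, r2)) :
  range_sub A B -> range_sub (L *m A) (L *m B).
Proof. by rewrite /range_sub !trmx_mul; apply: submxMr. Qed.

Lemma row_free_tr_mul m q r (A : 'M[R]_(m, q)) (B : 'M[R]_(q, r)) :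
  row_free A^T -> row_free B^T -> row_free (A *m B)^T.
Proof. by move=> fA fB; rewrite trmx_mul /row_free mxrankMfree. Qed.

End ColumnSpaces.

Section NullBasis.
Variables (R : fieldType) (m p r : nat) (A B : 'M[R]_(m, p)).
Variable Z : 'M[R]_(p + p, r).
Hypothesis nbZ : null_basis (row_mx A B) Z.

Lemma null_basis_rank : (r + \rank (col_mx A^T B^T) = p + p)%N.
Proof.
case/andP: nbZ => fZ eZ.
have := mxrank_ker (row_mx A B)^T.
rewrite -(eqmx_rank eZ) (eqP fZ) tr_row_mx => ->.
by rewrite subnK // -tr_row_mx mxrank_tr (leq_trans (rank_leq_col _)).
Qed.

Lemma null_basis_mul : A *m usubmx Z + B *m dsubmx Z = 0.
Proof.
case/andP: nbZ => _ /andP [/sub_kermxP h _].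
by rewrite -mul_row_col vsubmxK -[LHS]trmxK trmx_mul h trmx0.
Qed.

Lemma null_basis_usubmx_free : row_free B^T -> row_free (usubmx Z)^T.
Proof.
move=> fB; rewrite -kermx_eq0; set V := kermx _.
have VZu : V *m (usubmx Z)^T = 0 by rewrite mulmx_ker.
have VZd : V *m (dsubmx Z)^T = 0.
  apply/eqP; rewrite -(mulmx_free_eq0 _ fB) -mulmxA -trmx_mul.
  have /(congr1 trmx) := null_basis_mul.
  rewrite raddfD /= !trmx_mul trmx0 => /(congr1 (mulmx V)).
  by rewrite mulmxDr !mulmxA VZu mul0mx add0r mulmx0 => ->.
case/andP: nbZ => fZ _; rewrite -(mulmx_free_eq0 _ fZ).
by rewrite -[Z]vsubmxK tr_col_mx mul_mx_row VZu VZd row_mx0.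
Qed.

Lemma null_basis_range_sub : row_free B^T -> (p <= r)%N -> range_sub A B.
Proof.
move=> fB le_pr; have rk := null_basis_rank.
have rB : \rank B^T = p by rewrite (eqP fB).
have sBAB : (B^T <= col_mx A^T B^T)%MS by rewrite -addsmxE addsmxSr.
have sABB : (col_mx A^T B^T <= B^T)%MS.
  by rewrite -(mxrank_leqif_sup sBAB) eqn_leq mxrankS //= rB; lia.
by apply: submx_trans sABB; rewrite -addsmxE addsmxSl.
Qed.

Lemma null_basis_usubmx_range s (W V : 'M[R]_(p, s)) :
  A *m W = B *m V -> range_sub W (usubmx Z).
Proof.
move=> AWBV; case/andP: nbZ => _ eZ.
have /submxP [U hU] : (row_mx W^T (- V^T) <= Z^T)%MS.
  rewrite (eqmxP eZ); apply/sub_kermxP.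
  by rewrite tr_row_mx mul_row_col mulNmx -!trmx_mul AWBV subrr.
apply/submxP; exists U.
have := congr1 lsubmx hU.
by rewrite row_mxKl -[Z]vsubmxK tr_col_mx mul_mx_row row_mxKl vsubmxK.
Qed.

End NullBasis.

Section SSDRuns.
Variables (R : fieldType) (m q : nat) (DX DY : 'M[R]_(m, q)).

Lemma ssd_run_mull q' (L : 'M[R]_(q', q)) p (A B : 'M[R]_(m, p))
    (C : 'M[R]_(q, p)) r (out : 'M[R]_(q, r)) :
  ssd_run A B C out -> ssd_run A B (L *m C) (L *m out).
Proof.
elim=> {p A B C r out} [p A B C Z nbZ | p A B C r Z nbZ le_p |
                        p A B C r Z r' C' nbZ lt_p _ IH].
- by rewrite mulmx0; apply: SSD_trivial nbZ.
- exact: SSD_stop nbZ le_p.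
- by apply: SSD_step nbZ lt_p _; rewrite -mulmxA.
Qed.

Lemma ssd_run_invariant p (A B : 'M[R]_(m, p)) (C : 'M[R]_(q, p))
    r (out : 'M[R]_(q, r)) :
  ssd_run A B C out -> row_free DY^T ->
  A = DX *m C -> B = DY *m C -> row_free C^T ->
  exists K : 'M_r, DX *m out = DY *m out *m K.
Proof.
move=> run fY; elim: run => {p A B C r out}
  [p A B C Z _ _ _ _ | p A B C r Z nbZ le_p eA eB fC |
   p A B C r Z r' C' nbZ lt_p _ IH eA eB fC].
- by exists 0; rewrite !thinmx0.
- have fB : row_free B^T by rewrite eB row_free_tr_mul.
  have /range_subP [K eAB] := null_basis_range_sub nbZ fB le_p.
  by exists K; rewrite -eA -eB.
- have fB : row_free B^T by rewrite eB row_free_tr_mul.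
  apply: IH; rewrite ?eA ?eB ?mulmxA //.
  by rewrite row_free_tr_mul // (null_basis_usubmx_free nbZ fB).
Qed.

Lemma SSD_invariant r (out : 'M[R]_(q, r)) :
  SSD DX DY out -> row_free DY^T -> exists K : 'M_r, DX *m out = DY *m out *m K.
Proof.
move=> run fY; apply: (ssd_run_invariant run fY); rewrite ?mulmx1 //.
by rewrite /row_free trmx1 mxrank1.
Qed.

Section Pruning.
Variables (rg : nat) (Cg : 'M[R]_(q, rg)) (K : 'M[R]_rg).
Hypothesis CgK : DX *m Cg = DY *m Cg *m K.

Lemma null_basis_range_sub_usubmx p (A B : 'M[R]_(m, p)) (C : 'M[R]_(q, p))
    r (Z : 'M[R]_(p + p, r)) :
  null_basis (row_mx A B) Z -> A = DX *m C -> B = DY *m C ->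
  range_sub Cg C -> range_sub Cg (C *m usubmx Z).
Proof.
move=> nbZ eA eB /range_subP [W eCg]; rewrite eCg; apply: range_sub_mull.
apply: (null_basis_usubmx_range (V := W *m K) nbZ).
by rewrite eA eB -!mulmxA -eCg CgK eCg !mulmxA.
Qed.

Lemma ssd_run_range_sub p (A B : 'M[R]_(m, p)) (C : 'M[R]_(q, p))
    r (out : 'M[R]_(q, r)) :
  ssd_run A B C out -> A = DX *m C -> B = DY *m C ->
  range_sub Cg C -> range_sub Cg out.
Proof.
elim=> {p A B C r out} [p A B C Z nbZ eA eB CgC | // |
                        p A B C r Z r' C' nbZ _ _ IH eA eB CgC].
- rewrite -(thinmx0 (C *m usubmx Z)).
  exact: null_basis_range_sub_usubmx nbZ eA eB CgC.
- apply: IH; rewrite ?eA ?eB ?mulmxA //.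
  exact: null_basis_range_sub_usubmx nbZ eA eB CgC.
Qed.

End Pruning.

End SSDRuns.

Lemma mulmx_rows_sub (R : fieldType) m m' q (DX DY : 'M[R]_(m, q))
    (DXi DYi : 'M[R]_(m', q)) r (C : 'M[R]_(q, r)) (K : 'M_r) :
  (forall l, exists l', row l DXi = row l' DX /\ row l DYi = row l' DY) ->
  DX *m C = DY *m C *m K -> DXi *m C = DYi *m C *m K.
Proof.
move=> rows CK; apply/row_matrixP => l; have [l' [eX eY]] := rows l.
by rewrite !row_mul eX eY -!row_mul CK.
Qed.

Unset Implicit Arguments.
Theorem proposition4p8 (R : realFieldType) (n N Nd M : nat)
  (Mset : 'rV[R]_n -> Prop) (T : 'rV[R]_n -> 'rV[R]_n)
  (d : 'rV[R]_n -> 'rV[R]_Nd)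
  (X Y : 'M[R]_(N, n))
  (Ni : 'I_M -> nat) (Xi Yi : forall i : 'I_M, 'M[R]_(Ni i, n))
  (Ns : nat) (Xs Ys : 'M[R]_(Ns, n))
  (G : nat -> rel 'I_M) (Cs : nat -> 'I_M -> cmat R Nd)
  (rSSD : nat) (CSSD : 'M[R]_(Nd, rSSD)) :
  (forall x, Mset x -> Mset (T x)) ->
  (forall l, Mset (row l X)) ->
  (forall l, row l Y = T (row l X)) ->
  \rank (dict d X) = Nd -> \rank (dict d Y) = Nd ->
  (forall (i : 'I_M) (l : 'I_(Ni i)), exists l' : 'I_N,
      row l (Xi i) = row l' X /\ row l (Yi i) = row l' Y) ->
  (forall v : 'rV[R]_(Nd + Nd),
      (exists (i : 'I_M) (l : 'I_(Ni i)),
          row l (row_mx (dict d (Xi i)) (dict d (Yi i))) = v) <->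
      (exists l : 'I_N, row l (row_mx (dict d X) (dict d Y)) = v)) ->
  \rank (dict d Xs) = Nd -> \rank (dict d Ys) = Nd ->
  (forall (i : 'I_M) (l : 'I_Ns), exists l' : 'I_(Ni i),
      row l (row_mx (dict d Xs) (dict d Ys)) =
      row l' (row_mx (dict d (Xi i)) (dict d (Yi i)))) ->
  SSD (dict d X) (dict d Y) CSSD ->
  pssd_execution (fun i => dict d (Xi i)) (fun i => dict d (Yi i)) G Cs ->
  forall (k : nat) (i : 'I_M), range_sub CSSD (projT2 (Cs k i)).
Proof.
move=> _ _ _ _ rkY sub_rows _ _ _ _ ssdC [Cs0 Cs_step].
have fY : row_free (dict d Y)^T by rewrite /row_free mxrank_tr rkY.
have [K CK] := SSD_invariant ssdC fY.
have CKi i : dict d (Xi i) *m CSSD = dict d (Yi i) *m CSSD *m K.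
  apply: mulmx_rows_sub CK => l; have [l' [eX eY]] := sub_rows i l.
  by exists l'; rewrite !rowK eX eY.
elim=> [|k IH] i; first by rewrite Cs0 /range_sub /= trmx1 submx1.
have [s [D [t [E [capD [ssdE ->]]]]]] := Cs_step k i.
case: ifP => _ /=; last exact: IH.
have subD : range_sub CSSD D.
  rewrite /range_sub; case/andP: capD => _ /eqmxP ->.
  by apply/sub_bigcapmxP => j _; rewrite genmxE; apply: IH.
have := ssd_run_range_sub (CKi i) (ssd_run_mull D ssdE).
by rewrite mulmx1; apply.
Qed.
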